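(* Each of the following eight sets of four generalized Bell states in $\mathbb{C}^4\otimes\mathbb{C}^4$ is perfectly distinguishable by one-way LOCC using only projective measurements: $\{\ket{\psi_{00}}\}\cup T$ with $T$ one of $\{\ket{\psi_{01}},\ket{\psi_{02}},\ket{\psi_{11}}\}$, $\{\ket{\psi_{01}},\ket{\psi_{02}},\ket{\psi_{31}}\}$, $\{\ket{\psi_{01}},\ket{\psi_{10}},\ket{\psi_{23}}\}$, $\{\ket{\psi_{01}},\ket{\psi_{11}},\ket{\psi_{22}}\}$, $\{\ket{\psi_{01}},\ket{\psi_{22}},\ket{\psi_{31}}\}$, $\{\ket{\psi_{01}},\ket{\psi_{23}},\ket{\psi_{30}}\}$, $\{\ket{\psi_{02}},\ket{\psi_{11}},\ket{\psi_{21}}\}$, $\{\ket{\psi_{02}},\ket{\psi_{21}},\ket{\psi_{31}}\}$.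
   Context: Generalized Bell states in $\mathbb{C}^4\otimes\mathbb{C}^4$ (Alice holds the first factor, Bob the second): $\ket{\psi_{nm}}=\frac12\sum_{j=0}^{3}e^{2\pi i jn/4}\ket{j}_A\ket{j\oplus_4 m}_B$ for $n,m\in\{0,1,2,3\}$, where $j\oplus_4 m=(j+m)\bmod 4$. Perfect distinguishability by one-way LOCC using only projective measurements means: one party performs a projective measurement on her subsystem, communicates the outcome classically, and the other party then performs a projective measurement (depending on that outcome) whose result identifies with certainty which state of the set was shared. *)

From mathcomp Require Import all_boot all_order all_algebra algC.
Set Implicit Arguments. Unset Strict Implicit. Unset Printing Implicit Defensive.
Import Order.TTheory GRing.Theory Num.Theory.
Local Open Scope ring_scope.

Definition adjoint (A : 'M[algC]_4) : 'M[algC]_4 := map_mx (fun x => x^*) A^T.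

Definition proj_meas (m : nat) (P : 'I_m -> 'M[algC]_4) : Prop :=
  (forall k, P k *m P k = P k /\ adjoint (P k) = P k) /\
  \sum_(k < m) P k = 1%:M.

(* A vector of C^4 (x) C^4 is represented by its coefficient matrix C:
   psi = sum_{a,b} C a b |a>_A |b>_B.  Action of A (x) B on psi. *)
Definition tens_act (A B C : 'M[algC]_4) : 'M[algC]_4 :=
  \matrix_(a < 4, b < 4) \sum_(a' < 4) \sum_(b' < 4) A a a' * B b b' * C a' b'.

(* Born-rule probability || (A (x) B) psi ||^2 for projectors A, B. *)
Definition outcome_prob (A B C : 'M[algC]_4) : algC :=
  \sum_(a < 4) \sum_(b < 4) `|tens_act A B C a b| ^+ 2.

(* Generalized Bell state psi_{nm} = 1/2 sum_j e^{2 pi i j n/4} |j>|j+m mod 4>;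
   e^{2 pi i/4} = 'i. *)
Definition bell (s : nat * nat) : 'M[algC]_4 :=
  \matrix_(a < 4, b < 4)
    (if ((b : nat) == ((a : nat) + s.2) %% 4)%N then (1 / 2%:R) * 'i ^+ ((a : nat) * s.1)%N else 0).

(* One-way LOCC, Alice measures first (projectively), tells Bob the outcome k,
   Bob measures projectively with Q k; the guess g k l identifies the state
   with certainty: any outcome with nonzero probability for state s yields s. *)
Definition oneway_A_first (S : seq (nat * nat)) : Prop :=
  exists (mA mB : nat) (P : 'I_mA -> 'M[algC]_4) (Q : 'I_mA -> 'I_mB -> 'M[algC]_4)
         (g : 'I_mA -> 'I_mB -> nat * nat),
    proj_meas P /\ (forall k, proj_meas (Q k)) /\
    forall s, s \in S -> forall k l,
      outcome_prob (P k) (Q k l) (bell s) != 0 -> g k l = s.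

Definition oneway_B_first (S : seq (nat * nat)) : Prop :=
  exists (mB mA : nat) (P : 'I_mB -> 'M[algC]_4) (Q : 'I_mB -> 'I_mA -> 'M[algC]_4)
         (g : 'I_mB -> 'I_mA -> nat * nat),
    proj_meas P /\ (forall k, proj_meas (Q k)) /\
    forall s, s \in S -> forall k l,
      outcome_prob (Q k l) (P k) (bell s) != 0 -> g k l = s.

Definition oneway_proj_distinguishable (S : seq (nat * nat)) : Prop :=
  oneway_A_first S \/ oneway_B_first S.

(* Alice and Bob both measure in the basis (|c> + i^r |c+2>)/sqrt 2, c in {0, 1},
   r in {1, 3}.  The amplitude of psi_nm on a product outcome is a sum of two fourth
   roots of unity, and it vanishes as soon as these two phases are opposite, which
   is a congruence mod 4 on the labels.  For each of the eight sets a finite check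
   shows that every product outcome is compatible with at most one state of the set,
   so the pair of outcomes identifies the state. *)

From mathcomp Require Import all_boot all_order all_algebra algC.
From mathcomp Require Import ring.
Set Implicit Arguments. Unset Strict Implicit. Unset Printing Implicit Defensive.
Import Order.TTheory GRing.Theory Num.Theory.
Local Open Scope ring_scope.

(* [addn] and [muln] are [simpl never]; exposing [plus] and [mult] lets [/=]
   evaluate the concrete indices produced by case analysis. *)
Ltac nat_eval := rewrite ?addnE ?mulnE /=.

Lemma expCi4 : 'i ^+ 4 = 1 :> algC.
Proof. by rewrite (exprM 'i 2 2) sqrCi sqrrN expr1n. Qed.

Lemma expCi_add2 k : 'i ^+ (k + 2) = - 'i ^+ k :> algC.
Proof. by rewrite exprD sqrCi mulrN1. Qed.

Lemma conjCiX k : ('i ^+ k)^* = 'i ^+ (3 * k) :> algC.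
Proof. by rewrite rmorphXn /= conjCi exprM exprS sqrCi mulrN1. Qed.

Lemma expCiX_conjC k : 'i ^+ k * ('i ^+ k)^* = 1 :> algC.
Proof. by rewrite -normCK normrX normCi expr1n expr1n. Qed.

Lemma expCi_antipodal a b : (a + 2 = b %[mod 4])%N -> 'i ^+ a + 'i ^+ b = 0 :> algC.
Proof.
by move=> ab; rewrite -(expr_mod b expCi4) -ab (expr_mod _ expCi4) expCi_add2 subrr.
Qed.

Definition dyad (u : nat -> algC) : 'M[algC]_4 :=
  \matrix_(x < 4, y < 4) (u x * (u y)^*).

Definition sqnorm (u : nat -> algC) : algC := \sum_(z < 4) (u z)^* * u z.

Definition rank1_proj (u : nat -> algC) : 'M[algC]_4 := (sqnorm u)^-1 *: dyad u.

Lemma dyad_mulmx u : dyad u *m dyad u = sqnorm u *: dyad u.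
Proof.
apply/matrixP => x y; rewrite !mxE mulr_suml mulrC; apply: eq_bigr => z _.
by rewrite !mxE; ring.
Qed.

Lemma adjointZ a A : adjoint (a *: A) = a^* *: adjoint A.
Proof. by apply/matrixP => x y; rewrite !mxE rmorphM. Qed.

Lemma adjoint_dyad u : adjoint (dyad u) = dyad u.
Proof. by apply/matrixP => x y; rewrite !mxE /= rmorphM /= conjCK mulrC. Qed.

Lemma conjC_sqnorm u : (sqnorm u)^* = sqnorm u.
Proof.
by rewrite rmorph_sum; apply: eq_bigr => z _; rewrite rmorphM /= conjCK mulrC.
Qed.

Lemma rank1_proj_idem u : sqnorm u != 0 ->
  rank1_proj u *m rank1_proj u = rank1_proj u.
Proof.
move=> nz; rewrite /rank1_proj -scalemxAl -scalemxAr dyad_mulmx !scalerA.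
by rewrite mulrAC mulVf // mul1r.
Qed.

Lemma adjoint_rank1_proj u : adjoint (rank1_proj u) = rank1_proj u.
Proof. by rewrite adjointZ adjoint_dyad fmorphV /= conjC_sqnorm. Qed.

Lemma proj_meas_rank1 m (u : 'I_m -> nat -> algC) :
  (forall k, sqnorm (u k) != 0) -> \sum_(k < m) rank1_proj (u k) = 1%:M ->
  proj_meas (fun k => rank1_proj (u k)).
Proof.
by move=> nz sum1; split=> // k; rewrite rank1_proj_idem ?adjoint_rank1_proj.
Qed.

Definition overlap (u v : nat -> algC) (C : 'M[algC]_4) : algC :=
  \sum_(a < 4) \sum_(b < 4) (u a)^* * (v b)^* * C a b.

Lemma tens_act_rank1 u v C :
  tens_act (rank1_proj u) (rank1_proj v) C =
  (sqnorm u)^-1 * (sqnorm v)^-1 * overlap u v C *: \matrix_(a < 4, b < 4) (u a * v b).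
Proof.
apply/matrixP => a b; rewrite !mxE /overlap mulrC !mulr_sumr; apply: eq_bigr => a' _.
rewrite !mulr_sumr; apply: eq_bigr => b' _; rewrite !mxE; ring.
Qed.

Lemma outcome_prob_rank1_eq0 u v C : overlap u v C = 0 ->
  outcome_prob (rank1_proj u) (rank1_proj v) C = 0.
Proof.
move=> ov0; rewrite /outcome_prob tens_act_rank1 ov0 !mulr0 scale0r.
by rewrite big1 // => a _; rewrite big1 // => b _; rewrite mxE normr0 expr0n.
Qed.

Definition phase_vec (c r x : nat) : algC := (x == c)%:R + (x == c + 2)%:R * 'i ^+ r.

Lemma sqnorm_phase_vec c r : (c < 2)%N -> sqnorm (phase_vec c r) = 2%:R.
Proof.
case: c => [|[|//]] _; rewrite /sqnorm !big_ord_recr big_ord0 /phase_vec; nat_eval;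
  by rewrite !(mul0r, mul1r, addr0, add0r, rmorph0, rmorph1) mulrC expCiX_conjC; ring.
Qed.

Lemma dyad_phase_vec_pair c r :
  dyad (phase_vec c r) + dyad (phase_vec c r.+2) =
  2%:R *: \matrix_(x < 4, y < 4)
    ((x == c :> nat)%:R * (y == c :> nat)%:R
     + (x == c + 2 :> nat)%:R * (y == c + 2 :> nat)%:R).
Proof.
apply/matrixP => x y; rewrite !mxE /phase_vec -(addn2 r) expCi_add2.
rewrite !rmorphD !rmorphM /= !conjC_nat rmorphN /=.
apply/eqP; rewrite -subr_eq0; apply/eqP.
transitivity (2%:R * (x == c + 2 :> nat)%:R * (y == c + 2 :> nat)%:R
              * ('i ^+ r * ('i ^+ r)^* - 1 : algC)); first by ring.
by rewrite expCiX_conjC subrr mulr0.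
Qed.

Definition basis_labels : seq (nat * nat) := [:: (0, 1); (1, 1); (0, 3); (1, 3)]%N.

Definition basis_vec (k : nat) : nat -> algC :=
  phase_vec (nth (0, 0) basis_labels k).1 (nth (0, 0) basis_labels k).2.

Lemma sum_rank1_basis : \sum_(k < 4) rank1_proj (basis_vec k) = 1%:M.
Proof.
rewrite !big_ord_recr big_ord0 /= /rank1_proj !sqnorm_phase_vec // add0r -!scalerDr.
rewrite -addrA addrACA /basis_vec /= !dyad_phase_vec_pair -scalerDr scalerA.
rewrite mulVf ?pnatr_eq0 // scale1r; apply/matrixP => x y; rewrite !mxE.
by case: x y => [[|[|[|[|//]]]] ?] [[|[|[|[|//]]]] ?]; nat_eval;
  rewrite !(mulr0, mul0r, mulr1, addr0, add0r).
Qed.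

Lemma overlap_bell u v s : overlap u v (bell s) =
  2%:R^-1 * \sum_(a < 4) (u a)^* * ('i ^+ (a * s.1)%N * (v ((a + s.2) %% 4)%N)^*).
Proof.
rewrite /overlap mulr_sumr; apply: eq_bigr => a _.
rewrite (eq_bigr (fun b : 'I_4 => if (b : nat) == ((a + s.2) %% 4)%N
  then (u a)^* * (v b)^* * (2%:R^-1 * 'i ^+ (a * s.1)) else 0)); last first.
  by move=> b _; rewrite mxE mul1r; case: eqP; rewrite ?mulr0.
rewrite -big_mkcond (big_ord1_eq _
  (fun b => (u a)^* * (v b)^* * (2%:R^-1 * 'i ^+ (a * s.1)%N))).
by rewrite ltn_pmod //; ring.
Qed.

Lemma sum_conj_phase_vec c r (f : nat -> algC) : (c < 2)%N ->
  \sum_(a < 4) (phase_vec c r a)^* * f a = f c + ('i ^+ r)^* * f (c + 2)%N.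
Proof.
case: c => [|[|//]] _; rewrite !big_ord_recr big_ord0 /phase_vec; nat_eval;
  by rewrite !(mul0r, mul1r, addr0, add0r, rmorph0, rmorph1).
Qed.

Lemma phase_vec_antipodes c r x (alpha : algC) : (c < 2)%N -> (x < 4)%N ->
  (phase_vec c r x)^* + alpha * (phase_vec c r ((x + 2) %% 4))^* =
  if x == c then 1 + alpha * ('i ^+ r)^*
  else if x == (c + 2)%N then ('i ^+ r)^* + alpha else 0.
Proof.
case: c => [|[|//]] _; case: x => [|[|[|[|//]]]] _; rewrite /phase_vec; nat_eval;
  by rewrite !(mul0r, mul1r, mulr1, mulr0, addr0, add0r, rmorph0, rmorph1).
Qed.

(* Alice's components |c1>, |c1+2> are sent by psi_nm to Bob's |x>, |x+2>; the
   amplitude is then i^e1 + i^e2, which cancels when e1 + 2 = e2 mod 4. *)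
Definition bell_orth (p q s : nat * nat) : bool :=
  let x := ((p.1 + s.2) %% 4)%N in
  if x == q.1 then (2 == 3 * p.2 + 2 * s.1 + 3 * q.2 %[mod 4])%N
  else if x == (q.1 + 2)%N then (3 * q.2 + 2 == 3 * p.2 + 2 * s.1 %[mod 4])%N
  else true.

Lemma overlap_bell_eq0 p q s : (p.1 < 2)%N -> (q.1 < 2)%N -> bell_orth p q s ->
  overlap (phase_vec p.1 p.2) (phase_vec q.1 q.2) (bell s) = 0.
Proof.
move=> p1 q1; rewrite overlap_bell (@sum_conj_phase_vec _ _
  (fun a => 'i ^+ (a * s.1)%N * (phase_vec q.1 q.2 ((a + s.2) %% 4)%N)^*)) //=.
rewrite /bell_orth; set x := ((p.1 + s.2) %% 4)%N => orth.
have -> : ((p.1 + 2 + s.2) %% 4 = (x + 2) %% 4)%N by rewrite addnAC modnDml.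
transitivity (2%:R^-1 * 'i ^+ (p.1 * s.1) * ((phase_vec q.1 q.2 x)^*
  + 'i ^+ (3 * p.2 + 2 * s.1) * (phase_vec q.1 q.2 ((x + 2) %% 4))^*)).
  by rewrite mulnDl exprD [in RHS]exprD conjCiX; ring.
rewrite phase_vec_antipodes ?ltn_pmod //; move: orth.
case: ifP => [_ /eqP orth|_].
  by rewrite conjCiX -exprD (@expCi_antipodal 0 _ orth) mulr0.
case: ifP => [_ /eqP orth|_ _]; last by rewrite mulr0.
by rewrite conjCiX (expCi_antipodal orth) mulr0.
Qed.

Lemma proj_meas_basis : proj_meas (fun k : 'I_4 => rank1_proj (basis_vec k)).
Proof.
apply: proj_meas_rank1 sum_rank1_basis => k.
by case: k => [[|[|[|[|//]]]] ?]; rewrite sqnorm_phase_vec // pnatr_eq0.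
Qed.

Definition bell_guess (S : seq (nat * nat)) (p q : nat * nat) : nat * nat :=
  head (0, 0)%N [seq s <- S | ~~ bell_orth p q s].

Definition basis_separates (S : seq (nat * nat)) : bool :=
  all (fun p => all (fun q => count (fun s => ~~ bell_orth p q s) S <= 1)%N
    basis_labels) basis_labels.

Lemma head_filter_count1 (T : eqType) (x0 s : T) (P : pred T) (S : seq T) :
  (count P S <= 1)%N -> s \in S -> P s -> head x0 (filter P S) = s.
Proof.
rewrite -size_filter => size_le1 sS Ps.
have : s \in filter P S by rewrite mem_filter Ps.
by case: (filter P S) size_le1 => [|y [|//]] // _; rewrite inE => /eqP.
Qed.

Lemma basis_separates_oneway S : basis_separates S -> oneway_A_first S.
Proof.
move=> sep; pose label (k : nat) := nth (0, 0)%N basis_labels k.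
exists 4%N, 4%N, (fun k => rank1_proj (basis_vec k)),
  (fun _ l => rank1_proj (basis_vec l)), (fun k l => bell_guess S (label k) (label l)).
split; first exact: proj_meas_basis.
split=> [_|]; first exact: proj_meas_basis.
have labelP (j : 'I_4) : label j \in basis_labels by rewrite mem_nth.
have label_lt2 (j : 'I_4) : ((label j).1 < 2)%N by case: j => [[|[|[|[|//]]]] ?].
move=> s sS k l nz; have [orth|nonorth] := boolP (bell_orth (label k) (label l) s).
  by move: nz; rewrite outcome_prob_rank1_eq0 ?eqxx // overlap_bell_eq0 ?label_lt2.
rewrite /bell_guess (head_filter_count1 _ _ sS nonorth) //.
by move/allP: sep => /(_ _ (labelP k)) /allP /(_ _ (labelP l)).
Qed.

Theorem theorem4 :
  forall T : seq (nat * nat),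
    T \in [:: [:: (0,1); (0,2); (1,1)];
              [:: (0,1); (0,2); (3,1)];
              [:: (0,1); (1,0); (2,3)];
              [:: (0,1); (1,1); (2,2)];
              [:: (0,1); (2,2); (3,1)];
              [:: (0,1); (2,3); (3,0)];
              [:: (0,2); (1,1); (2,1)];
              [:: (0,2); (2,1); (3,1)]]%N ->
    oneway_proj_distinguishable ((0,0)%N :: T).
Proof.
move=> T memT; left; apply: basis_separates_oneway; move: T memT.
by apply/allP; vm_compute.
Qed.
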